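(* Let $d\ge1$, let $T>0$ be a finite random variable with $D\in\{1,\dots,d\}$, and let $\tilde T$ be a finite random variable with $0<\tilde T\le T$ and $\tilde D=D\,\mathbf 1\{\tilde T=T\}$. If the representativity property holds, i.e. $$P(T\le t,D=j\mid\tilde T>s)=P(T\le t,D=j\mid T>s)\quad\text{for all } t\ge0,\ s\in\mathcal J,\ j=1,\dots,d,$$ then the identifiability property holds, i.e. $\tilde H_j(t)=H_j(t)$ for all $t\in\mathcal J$ and $j=1,\dots,d$. The reverse implication does not hold: there exist such $(T,D,\tilde T,\tilde D)$ for which the identifiability property holds but the representativity property fails.
   Context: Functions of the event time: - $S(t)=P(T>t)$. - $F_j(t)=P(T\le t,D=j)$. - $H_j(t)=\int_{(0,t]}S(s-)^{-1}F_j(ds)$. Observed quantities: - $\tilde S(t)=P(\tilde T>t)$. - $\tilde F_j(t)=P(\tilde T\le t,\tilde D=j)$. - $\tilde H_j(t)=\int_{(0,t]}\tilde S(s-)^{-1}\tilde F_j(ds)$. - Division by $0$ occurs only on null sets of the integrator. - $\mathcal J=\{t\ge0:\tilde S(t)>0\}$. *)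

From HB Require Import structures.
From mathcomp Require Import all_boot all_order all_algebra.
From mathcomp Require Import all_classical all_reals all_analysis.
Set Implicit Arguments. Unset Strict Implicit. Unset Printing Implicit Defensive.
Import Order.TTheory GRing.Theory Num.Theory.
Import numFieldNormedType.Exports.
Local Open Scope classical_set_scope.
Local Open Scope ring_scope.

Section Defs.
Context {d0 : measure_display} {Omega : measurableType d0} {R : realType}.
Variable P : probability Omega R.

Definition surv (X : Omega -> R) (t : R) : R := fine (P [set w | t < X w]).

Definition surv_left (X : Omega -> R) (s : R) : R :=
  lim (surv X x @[x --> s^'-]).

Definition subdist (X : Omega -> R) (Y : Omega -> nat) (j : nat)
  : set R -> \bar R :=
  fun A => P (X @^-1` A `&` [set w | Y w = j]).

Definition subdf (X : Omega -> R) (Y : Omega -> nat) (j : nat) (t : R) : R :=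
  fine (P ([set w | X w <= t] `&` [set w | Y w = j])).

Definition cumhaz (X : Omega -> R) (Y : Omega -> nat) (j : nat) (t : R)
  : \bar R :=
  (\int[subdist X Y j]_(s in `]0%R, t]%classic) ((surv_left X s)^-1)%:E)%E.

Definition condprob (A B : set Omega) : R :=
  fine (P (A `&` B)) / fine (P B).

Definition obs_status (T Tt : Omega -> R) (D : Omega -> nat) : Omega -> nat :=
  fun w => if Tt w == T w then D w else 0%N.

Definition Jset (Tt : Omega -> R) : set R :=
  [set t | 0 <= t /\ 0 < surv Tt t].

Definition model (d : nat) (T Tt : Omega -> R) (D : Omega -> nat) : Prop :=
  [/\ measurable_fun setT T /\ measurable_fun setT Tt,
      (forall j : nat, measurable [set w | D w = j]),
      (forall w, 0 < T w), (forall w, (1 <= D w <= d)%N)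
    & (forall w, 0 < Tt w /\ Tt w <= T w)].

Definition representativity (d : nat) (T Tt : Omega -> R) (D : Omega -> nat)
  : Prop :=
  forall (t s : R) (j : nat), 0 <= t -> s \in Jset Tt -> (1 <= j <= d)%N ->
    condprob ([set w | T w <= t] `&` [set w | D w = j]) [set w | s < Tt w]
    = condprob ([set w | T w <= t] `&` [set w | D w = j]) [set w | s < T w].

Definition identifiability (d : nat) (T Tt : Omega -> R) (D : Omega -> nat)
  : Prop :=
  forall (t : R) (j : nat), t \in Jset Tt -> (1 <= j <= d)%N ->
    cumhaz Tt (obs_status T Tt D) j t = cumhaz T D j t.

End Defs.

(* Both cumulative hazards are integrals of 1/S(s-) against a sub-distribution
   over (0, t], hence, by dominated convergence, limits of left Stieltjes sums
   over the uniform partitions t_k = k t/(n+1) of (0, t].  Representativity at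
   s = t_k turns the k-th term of the difference of the two sums into
   P(C_k)/S~(t_k), where C_k is the event that T <= t_(k+1), D = j and
   T~ > t_k, but cause j is not observed in (t_k, t_(k+1)].  On C_k we have
   T~ < T, so the C_k are disjoint subsets of {0 < T - T~ < t/(n+1)}, whose
   probability vanishes as n grows; since S~(t_k) >= S~(t) > 0, the two sums
   have the same limit.
   For the converse, on two equally likely outcomes take D = 1, T in {2, 3} and
   T~ = T - 1: both cumulative hazards vanish on J = [0, 2), whereas
   P(T <= 2 | T~ > 3/2) = 0 differs from P(T <= 2 | T > 3/2) = 1/2. *)

From HB Require Import structures.
From mathcomp Require Import all_boot all_order all_algebra.
From mathcomp Require Import all_classical all_reals all_analysis.
From mathcomp Require Import lra measurable_realfun.
Set Implicit Arguments. Unset Strict Implicit. Unset Printing Implicit Defensive.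
Import Order.TTheory GRing.Theory Num.Theory.
Import numFieldNormedType.Exports.
Local Open Scope classical_set_scope.
Local Open Scope ring_scope.

Definition grid {R : realType} (t : R) (n k : nat) : R := k%:R * (t / n.+1%:R).

Section uniform_grid.
Context {R : realType} (t : R) (n : nat).
Hypothesis tpos : 0 < t.

Lemma grid0 : grid t n 0 = 0.
Proof. by rewrite /grid mul0r. Qed.

Lemma grid_last : grid t n n.+1 = t.
Proof. by rewrite /grid mulrCA divff ?mulr1// pnatr_eq0. Qed.

Lemma gridS k : grid t n k.+1 = grid t n k + t / n.+1%:R.
Proof. by rewrite /grid -addn1 natrD mulrDl mul1r. Qed.

Lemma grid_le a b : (a <= b)%N -> grid t n a <= grid t n b.
Proof. by move=> ab; rewrite /grid ler_wpM2r ?ler_nat// divr_ge0 ?(ltW tpos). Qed.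

Lemma grid_ge0 k : 0 <= grid t n k.
Proof. by rewrite -grid0; exact: grid_le (leq0n k). Qed.

Lemma grid_le_last k : (k <= n.+1)%N -> grid t n k <= t.
Proof. by move=> kn; rewrite -[leRHS]grid_last; exact: grid_le kn. Qed.

Lemma grid_cell u : 0 < u <= t ->
  exists2 k, (k < n.+1)%N & grid t n k < u <= grid t n k.+1.
Proof.
move=> /andP[u0 ut].
have ex : exists m, u <= grid t n m.+1 by exists n; rewrite grid_last.
case: (ex_minnP ex) => m um mmin; exists m.
  by rewrite ltnS mmin// grid_last.
rewrite um andbT; case: m um mmin => [|m] um mmin; first by rewrite grid0.
by rewrite ltNge; apply/negP => /mmin; rewrite ltnn.
Qed.

Lemma grid_cell_uniq u k k' : grid t n k < u <= grid t n k.+1 ->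
  grid t n k' < u <= grid t n k'.+1 -> k = k'.
Proof.
move=> /andP[a1 a2] /andP[b1 b2]; apply/eqP; rewrite eqn_leq.
apply/andP; split; rewrite leqNgt; apply/negP => /grid_le.
  by rewrite leNgt (lt_le_trans a1 b2).
by rewrite leNgt (lt_le_trans b1 a2).
Qed.

End uniform_grid.

Lemma nonincreasing_left_lim_cvg {R : realType} (c : R -> R) u :
  {homo c : x y / x <= y >-> y <= x} -> cvg (c x @[x --> u^'-]).
Proof.
move=> c_ni; rewrite -is_cvgNE; apply: nondecreasing_at_left_is_cvgr.
  by near=> x => a b _ _ ab /=; rewrite lerN2; exact: c_ni.
near=> x; exists (- c u) => _ [y /= + <-]; rewrite in_itv/= => /andP[_ yu].
by rewrite lerN2 c_ni// ltW.
Unshelve. all: by end_near. Qed.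

Lemma cvg_div_succ {R : realType} (t : R) : t / n.+1%:R @[n --> \oo] --> 0.
Proof.
rewrite -(mulr0 t); apply: (cvgM (cvg_cst t)).
exact: (@cvg_harmonic R).
Qed.

Definition stieltjes_sum {R : realType} (mu : set R -> \bar R) (c : R -> R)
    (t : R) (n : nat) : R :=
  \sum_(k < n.+1)
    (c (grid t n k))^-1 * fine (mu `]grid t n k, grid t n k.+1]%classic).

Section stieltjes_sum_cvg.
Context {R : realType} (mu : {measure set R -> \bar R}) (c : R -> R) (t : R).
Local Notation Dt := (`]0, t]%classic : set R).
Hypotheses (tpos : 0 < t) (mu_fin : (mu Dt < +oo)%E)
  (c_ni : {homo c : x y / x <= y >-> y <= x}) (ct_gt0 : 0 < c t).

Local Notation cell n k := `]grid t n k, grid t n k.+1]%classic.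
(* For c := surv P X, [cl u] is [surv_left P X u]. *)
Local Notation cl u := (lim (c x @[x --> u^'-])).

Let cell_sub n (k : 'I_n.+1) : cell n k `<=` Dt.
Proof.
move=> x /=; rewrite !in_itv/= => /andP[a b].
by rewrite (le_lt_trans (grid_ge0 n tpos k) a) (le_trans b)// grid_le_last.
Qed.

Let cell_fin n (k : 'I_n.+1) : mu (cell n k) \is a fin_num.
Proof.
rewrite ge0_fin_numE// (le_lt_trans _ mu_fin)//.
by apply: le_measure; rewrite ?inE//; exact: cell_sub.
Qed.

Let c_ge_ct x : x <= t -> c t <= c x. Proof. exact: c_ni. Qed.

Lemma left_lim_ge u : 0 < u <= t -> c t <= cl u.
Proof.
move=> /andP[_ ut]; apply: limr_ge; first exact: nonincreasing_left_lim_cvg.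
near=> x; apply: c_ge_ct; apply: (le_trans _ ut); apply: ltW.
by near: x; exact: nbhs_left_lt.
Unshelve. all: by end_near. Qed.

Let cl_gt0 u : 0 < u <= t -> 0 < cl u.
Proof. by move=> /left_lim_ge; exact: lt_le_trans. Qed.

Lemma grid_left_lim_cvg u (k : nat -> nat) :
  (forall n, grid t n (k n) < u <= grid t n (k n).+1) ->
  c (grid t n (k n)) @[n --> \oo] --> cl u.
Proof.
move=> hk; have lt_u n : grid t n (k n) < u by have /andP[] := hk n.
apply: (cvg_at_leftP c u (cl u)).1.
  exact: nonincreasing_left_lim_cvg.
split=> //; apply: (@squeeze_cvgr _ _ _ _ (fun n => u - t / n.+1%:R) (fun=> u)).
- near=> n; rewrite (ltW (lt_u n)) andbT lerBlDr -gridS.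
  by have /andP[] := hk n.
- rewrite -[X in _ --> X]subr0; apply: cvgB; first exact: cvg_cst.
  exact: cvg_div_succ.
- exact: cvg_cst.
Unshelve. all: by end_near. Qed.

Let step n u : \bar R :=
  (\sum_(k < n.+1) ((c (grid t n k))^-1 * \1_(cell n k) u)%:E)%E.

Let stepE n u k : (k < n.+1)%N -> grid t n k < u <= grid t n k.+1 ->
  step n u = ((c (grid t n k))^-1)%:E.
Proof.
move=> kn hu; rewrite /step (bigD1 (Ordinal kn)) //= big1 ?adde0.
  by rewrite indicE mem_set ?mulr1//= in_itv.
move=> i /eqP ik; rewrite indicE memNset ?mulr0//= in_itv/= => hi.
by apply: ik; apply/val_inj; exact: (grid_cell_uniq tpos hi hu).
Qed.

Let measurable_step n : measurable_fun Dt (step n).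
Proof.
apply: emeasurable_sum => k; apply/measurable_EFinP.
by apply: measurable_funM; [exact: measurable_cst|exact: measurable_indic].
Qed.

Let step_cvg u : Dt u -> step n u @[n --> \oo] --> ((cl u)^-1)%:E.
Proof.
rewrite /= in_itv/= => hu.
have /choice[k hk] n : exists k, (k < n.+1)%N /\ grid t n k < u <= grid t n k.+1.
  by have [k kn hkn] := grid_cell n hu; exists k.
have hk' n : grid t n (k n) < u <= grid t n (k n).+1 by have [] := hk n.
have cvg_inv := cvgV (lt0r_neq0 (cl_gt0 hu)) (grid_left_lim_cvg hk').
have : (EFin \o (fun n => (c (grid t n (k n)))^-1)) @ \oo --> ((cl u)^-1)%:E.
  by apply: cvg_EFin; [exact: nearW|exact: cvg_inv].
apply: cvg_trans; apply: near_eq_cvg; near=> n.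
by rewrite /= (stepE (hk n).1 (hk' n)).
Unshelve. all: by end_near. Qed.

Let step_bound n u : Dt u -> (`|step n u| <= ((c t)^-1)%:E)%E.
Proof.
rewrite /= in_itv/= => hu; have [k kn hk] := grid_cell n hu.
have ck : c t <= c (grid t n k).
  by apply: c_ge_ct; rewrite (le_trans (ltW _) (andP hu).2)//; case/andP: hk.
rewrite (stepE kn hk) abse_EFin lee_fin ger0_norm; last first.
  by rewrite invr_ge0 (le_trans (ltW ct_gt0)).
by rewrite lef_pV2// posrE (lt_le_trans ct_gt0).
Qed.

Let integral_step n :
  (\int[mu]_(u in Dt) step n u = (stieltjes_sum mu c t n)%:E)%E.
Proof.
have ck (k : 'I_n.+1) : 0 <= (c (grid t n k))^-1.
  by rewrite invr_ge0 (le_trans (ltW ct_gt0))// c_ge_ct// grid_le_last// ltnW.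
rewrite /step ge0_integral_sum//; last 2 first.
- move=> k; apply/measurable_EFinP.
  by apply: measurable_funM; [exact: measurable_cst|exact: measurable_indic].
- by move=> k u _; rewrite lee_fin mulr_ge0 ?indic_ge0.
rewrite /stieltjes_sum -sumEFin; apply: eq_bigr => k _.
rewrite (integralZl_indic _ (fun _ => cell n k))//; last first.
  by move=> h; exfalso; move: h; rewrite ltNge ck.
by rewrite integral_indic// setIidl ?cell_sub// EFinM fineK.
Qed.

Lemma measurable_inv_left_lim : measurable_fun Dt (fun u => ((cl u)^-1)%:E).
Proof. exact: emeasurable_fun_cvg _ _ measurable_step step_cvg. Qed.

Let integrable_bound : mu.-integrable Dt (cst ((c t)^-1)%:E).
Proof.
apply/integrableP; split; first exact: measurable_cst.
by rewrite integral_cst// lte_mul_pinfty ?abse_ge0.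
Qed.

Lemma integral_inv_left_lim_fin_num :
  (\int[mu]_(u in Dt) ((cl u)^-1)%:E)%E \is a fin_num.
Proof.
have inv_ge0 u : Dt u -> (0 <= ((cl u)^-1)%:E)%E.
  by move=> /= /[!in_itv]/= hu; rewrite lee_fin invr_ge0 ltW// cl_gt0.
rewrite ge0_fin_numE ?integral_ge0//.
apply: (@le_lt_trans _ _ (\int[mu]_(u in Dt) ((c t)^-1)%:E)%E); last first.
  by rewrite integral_cst// lte_mul_pinfty ?lee_fin ?invr_ge0 ?ltW.
apply: ge0_le_integral => //; first exact: measurable_inv_left_lim.
move=> u /= /[!in_itv]/= hu.
by rewrite lee_fin lef_pV2 ?posrE ?cl_gt0// ?left_lim_ge.
Qed.

Lemma stieltjes_sum_cvg : stieltjes_sum mu c t n @[n --> \oo] -->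
  fine (\int[mu]_(u in Dt) ((cl u)^-1)%:E)%E.
Proof.
have bound_fin u : Dt u -> ((c t)^-1)%:E \is a fin_num by [].
have := dominated_cvg (measurable_itv _) measurable_step step_cvg bound_fin
  integrable_bound step_bound.
rewrite -(fineK integral_inv_left_lim_fin_num) => /fine_cvg.
apply: cvg_trans; apply: near_eq_cvg; apply: nearW => n /=.
by rewrite integral_step.
Qed.

End stieltjes_sum_cvg.

Lemma measurable_set_of_bool d (T : measurableType d) (b : T -> bool) :
  measurable_fun setT b -> measurable [set w | b w].
Proof.
move=> mb; rewrite -[X in measurable X]setTI.
exact: (mb measurableT [set true]).
Qed.

Section observed_status.
Context {d0 : measure_display} {Omega : measurableType d0} {R : realType}.
Variables (T Tt : Omega -> R) (D : Omega -> nat) (j : nat).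
Hypothesis j_neq0 : j != 0%N.

Lemma obs_statusE w : obs_status T Tt D w = j <-> Tt w = T w /\ D w = j.
Proof.
rewrite /obs_status; case: eqP => [->|//]; first by split=> [|[]].
by split=> [j0|[]//]; move: j_neq0; rewrite -j0.
Qed.

Lemma measurable_obs_status : measurable_fun setT T -> measurable_fun setT Tt ->
  measurable [set w | D w = j] -> measurable [set w | obs_status T Tt D w = j].
Proof.
move=> mT mTt mD.
rewrite (_ : [set w | _] = [set w | Tt w == T w] `&` [set w | D w = j]).
  apply: measurableI => //; apply: measurable_set_of_bool.
  exact: measurable_fun_eqr.
apply/seteqP; split=> w /=; first by case/obs_statusE => -> ->.
by case=> /eqP TtT Dj; apply/obs_statusE.
Qed.

End observed_status.

Section survival.
Context {d0 : measure_display} {Omega : measurableType d0} {R : realType}.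
Variable P : probability Omega R.
Implicit Types X Y : Omega -> R.

Lemma measurable_preimage (X : Omega -> R) A : measurable_fun setT X ->
  measurable A -> measurable (X @^-1` A).
Proof. by move=> mX mA; rewrite -[X in measurable X]setTI; exact: mX. Qed.

Lemma measurable_gtr_set X a :
  measurable_fun setT X -> measurable [set w | a < X w].
Proof.
by move=> mX; apply: measurable_set_of_bool; exact: measurable_fun_ltr.
Qed.

Lemma measurable_ler_set X a :
  measurable_fun setT X -> measurable [set w | X w <= a].
Proof.
by move=> mX; apply: measurable_set_of_bool; exact: measurable_fun_ler.
Qed.

Lemma surv_le X Y t : measurable_fun setT X -> measurable_fun setT Y ->
  (forall w, Y w <= X w) -> surv P Y t <= surv P X t.
Proof.
move=> mX mY YX; have mXt := measurable_gtr_set t mX.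
have mYt := measurable_gtr_set t mY.
apply: fine_le; rewrite ?fin_num_measure//.
by apply: le_measure; rewrite ?inE// => w /= /lt_le_trans; apply.
Qed.

Lemma surv_nonincreasing X : measurable_fun setT X ->
  {homo surv P X : x y / x <= y >-> y <= x}.
Proof.
move=> mX x y xy; have mXx := measurable_gtr_set x mX.
have mXy := measurable_gtr_set y mX.
apply: fine_le; rewrite ?fin_num_measure//.
by apply: le_measure; rewrite ?inE// => w /=; exact: le_lt_trans.
Qed.

Lemma subdist_measure X (Y : Omega -> nat) j : measurable_fun setT X ->
  measurable [set w | Y w = j] ->
  exists mu : {measure set R -> \bar R}, subdist P X Y j = mu.
Proof.
move=> mX mY.
pose mu := (pushforward (mrestr P mY) X : {measure set R -> \bar R}).
by exists (mu mX).
Qed.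

Lemma cumhaz_at0 X (Y : Omega -> nat) j : measurable_fun setT X ->
  measurable [set w | Y w = j] -> cumhaz P X Y j 0 = 0%E.
Proof.
move=> mX mY; have [mu E] := subdist_measure mX mY.
by rewrite /cumhaz set_itvoc0 E integral_set0.
Qed.

Lemma prob_itv_shrink_cvg0 (Z : Omega -> R) t : measurable_fun setT Z -> 0 <= t ->
  fine (P (Z @^-1` `]0, t / n.+1%:R[%classic)) @[n --> \oo] --> 0.
Proof.
move=> mZ t_ge0; pose G n := Z @^-1` `]0, t / n.+1%:R[%classic.
have mG n : measurable (G n) by apply: measurable_preimage.
have G0 : \bigcap_n G n = set0.
  apply/seteqP; split => // w /= Gw.
  have := Gw 0%N Logic.I; rewrite /G /= in_itv/= => /andP[Zw_gt0 _].
  have := Gw (Num.truncn (t / Z w)) Logic.I; rewrite /G /= in_itv/= => /andP[_].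
  rewrite ltr_pdivlMr ?ltr0n// => h1.
  have := truncnS_gt (t / Z w); rewrite ltr_pdivrMr// => h2.
  by move: (lt_trans h1 h2); rewrite mulrC ltxx.
have PG0_fin : (P (G 0%N) < +oo)%E by rewrite ltey_eq fin_num_measure.
have := nonincreasing_cvg_mu PG0_fin mG.
rewrite G0 measure0 => /(_ measurable0) G_cvg.
apply: (fine_cvg (f := P \o G)); apply: G_cvg => m n mn; rewrite subsetEset.
move=> w; rewrite /G /= !in_itv/= => /andP[-> Zw] /=.
apply: (lt_le_trans Zw); rewrite ler_wpM2l// lef_pV2 ?posrE ?ltr0n//.
by rewrite ler_nat.
Qed.

Section cumhaz_stieltjes.
Variables (X : Omega -> R) (Y : Omega -> nat) (j : nat) (t : R).
Hypotheses (mX : measurable_fun setT X) (mY : measurable [set w | Y w = j])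
  (tpos : 0 < t) (surv_t_gt0 : 0 < surv P X t).

Let subdist_fin : (subdist P X Y j `]0%R, t]%classic < +oo)%E.
Proof.
rewrite (le_lt_trans (probability_le1 _ _)) ?ltry//.
by apply: measurableI => //; rewrite -[X in measurable X]setTI; exact: mX.
Qed.

Lemma cumhaz_fin_num : cumhaz P X Y j t \is a fin_num.
Proof.
have [mu E] := subdist_measure mX mY; rewrite /cumhaz E.
apply: integral_inv_left_lim_fin_num => //; first by rewrite -E.
exact: surv_nonincreasing.
Qed.

Lemma stieltjes_sum_cvg_cumhaz :
  stieltjes_sum (subdist P X Y j) (surv P X) t n @[n --> \oo] -->
  fine (cumhaz P X Y j t).
Proof.
have [mu E] := subdist_measure mX mY; rewrite /cumhaz E.
apply: stieltjes_sum_cvg => //; first by rewrite -E.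
exact: surv_nonincreasing.
Qed.

Lemma cumhaz_null :
  subdist P X Y j `]0%R, t]%classic = 0%E -> cumhaz P X Y j t = 0%E.
Proof.
rewrite /cumhaz; have [mu ->] := subdist_measure mX mY => mu0.
apply: null_set_integral => //; apply: measurable_inv_left_lim => //.
exact: surv_nonincreasing.
Qed.

End cumhaz_stieltjes.
End survival.

Section representativity_identifiability.
Context {d0 : measure_display} {Omega : measurableType d0} {R : realType}.
Variables (P : probability Omega R) (d : nat).
Variables (T Tt : Omega -> R) (D : Omega -> nat).
Hypotheses (hm : model d T Tt D) (hrep : representativity P d T Tt D).
Variables (t : R) (j : nat).
Hypotheses (tpos : 0 < t) (surv_t_gt0 : 0 < surv P Tt t) (hj : (1 <= j <= d)%N).

Let mT : measurable_fun setT T. Proof. by case: hm => -[]. Qed.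
Let mTt : measurable_fun setT Tt. Proof. by case: hm => -[]. Qed.
Let mD : measurable [set w | D w = j]. Proof. by case: hm. Qed.
Let Tt_le_T w : Tt w <= T w. Proof. by case: hm => _ _ _ _ /(_ w) []. Qed.

Let j_neq0 : j != 0%N. Proof. by case: j hj. Qed.

Let measurable_obs : measurable [set w | obs_status T Tt D w = j].
Proof. exact: measurable_obs_status. Qed.

Local Notation cell n k := `]grid t n k, grid t n k.+1]%classic.
Let failed n k := [set w | T w <= grid t n k.+1] `&` [set w | D w = j].
Let retained n k := failed n k `&` [set w | grid t n k < Tt w].
Let observed n k := Tt @^-1` cell n k `&` [set w | obs_status T Tt D w = j].
Let lost n k := retained n k `\` observed n k.
Let gap n := (T \- Tt) @^-1` `]0, t / n.+1%:R[%classic.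

Let measurable_observed n k : measurable (observed n k).
Proof. by apply: measurableI => //; exact: measurable_preimage. Qed.

Let measurable_retained n k : measurable (retained n k).
Proof.
apply: measurableI; last exact: measurable_gtr_set.
by apply: measurableI => //; exact: measurable_ler_set.
Qed.

Let measurable_lost n k : measurable (lost n k).
Proof. exact: measurableD. Qed.

Let surv_grid_ge n (k : 'I_n.+1) : surv P Tt t <= surv P Tt (grid t n k).
Proof. by apply: surv_nonincreasing; rewrite // grid_le_last// ltnW. Qed.

Let surv_grid_gt0 n (k : 'I_n.+1) : 0 < surv P Tt (grid t n k).
Proof. exact: lt_le_trans surv_t_gt0 (surv_grid_ge k). Qed.

Let stieltjes_term_diff n (k : 'I_n.+1) :
  (surv P T (grid t n k))^-1 * fine (subdist P T D j (cell n k)) -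
  (surv P Tt (grid t n k))^-1 *
    fine (subdist P Tt (obs_status T Tt D) j (cell n k))
  = fine (P (lost n k)) / surv P Tt (grid t n k).
Proof.
have grid_J : grid t n k \in Jset P Tt.
  by rewrite inE; split; [exact: grid_ge0|exact: surv_grid_gt0].
have := hrep (grid_ge0 n tpos k.+1) grid_J hj; rewrite /condprob => hr.
have -> : subdist P T D j (cell n k) =
    P (failed n k `&` [set w | grid t n k < T w]).
  congr (P _); apply/seteqP; split=> w /=; rewrite in_itv/=.
    by case=> /andP[? ?] ?.
  by case=> -[? ?] ->; split.
rewrite [X in X - _]mulrC -hr [X in _ - X]mulrC -mulrBl; congr (_ / _).
have observed_sub : observed n k `<=` retained n k.
  move=> w [/=]; rewrite in_itv/= => /andP[a_lt b_ge].
  move=> /(obs_statusE T Tt D j_neq0)[TtT Dj].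
  by split=> //; split=> //=; rewrite -TtT.
rewrite -[subdist _ _ _ _ _]/(P (observed n k)) /lost measureD//.
  by rewrite (setIidr observed_sub) fineB// fin_num_measure.
by rewrite ltey_eq fin_num_measure.
Qed.

Let stieltjes_sum_diff n :
  stieltjes_sum (subdist P T D j) (surv P T) t n -
  stieltjes_sum (subdist P Tt (obs_status T Tt D) j) (surv P Tt) t n =
  \sum_(k < n.+1) fine (P (lost n k)) / surv P Tt (grid t n k).
Proof. by rewrite -sumrB; apply: eq_bigr => k _; rewrite stieltjes_term_diff. Qed.

Let lost_trivIset n : trivIset setT (lost n).
Proof.
move=> k k' _ _ [w [[[[/= Tb _] /= aTt] _] [[[/= Tb' _] /= aTt'] _]]].
apply: (grid_cell_uniq (n := n) tpos (u := T w)).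
  by rewrite Tb andbT (lt_le_trans aTt).
by rewrite Tb' andbT (lt_le_trans aTt').
Qed.

Let lost_sub_gap n k : lost n k `<=` gap n.
Proof.
move=> w [[[Tb Dj] aTt] unobserved]; rewrite /gap /= in_itv/=.
have Tt_lt_T : Tt w < T w.
  rewrite lt_neqAle Tt_le_T andbT; apply/eqP => TtT; apply: unobserved.
  by split; [rewrite /= in_itv/= aTt TtT|exact/(obs_statusE T Tt D j_neq0)].
rewrite subr_gt0 Tt_lt_T ltrBlDr (le_lt_trans Tb)// gridS.
by rewrite [ltRHS]addrC ltrD2r.
Qed.

Let sum_lost_le_gap n :
  \sum_(k < n.+1) fine (P (lost n k)) <= fine (P (gap n)).
Proof.
have mgap : measurable (gap n).
  by apply: measurable_preimage; [exact: measurable_funB|exact: measurable_itv].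
have mU : measurable (\big[setU/set0]_(k < n.+1) lost n k).
  exact: bigsetU_measurable.
have -> : \sum_(k < n.+1) fine (P (lost n k)) =
    fine (P (\big[setU/set0]_(k < n.+1) lost n k)).
  rewrite measure_bigsetU//.
  rewrite -[LHS]/(fine (\sum_(k < n.+1) fine (P (lost n k)))%:E) -sumEFin.
  by congr fine; apply: eq_bigr => k _; rewrite fineK ?fin_num_measure.
apply: fine_le; rewrite ?fin_num_measure//.
apply: le_measure; rewrite ?inE//.
by apply: (big_ind (fun X => X `<=` gap n)) => // X Y hX hY w [/hX|/hY].
Qed.

Let stieltjes_sum_diff_bound n :
  0 <= stieltjes_sum (subdist P T D j) (surv P T) t n -
       stieltjes_sum (subdist P Tt (obs_status T Tt D) j) (surv P Tt) t n
    <= fine (P (gap n)) / surv P Tt t.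
Proof.
rewrite stieltjes_sum_diff; apply/andP; split.
  apply: sumr_ge0 => k _.
  by rewrite divr_ge0 ?fine_ge0 ?measure_ge0 ?ltW ?surv_grid_gt0.
apply: (@le_trans _ _ (\sum_(k < n.+1) fine (P (lost n k)) / surv P Tt t)).
  apply: ler_sum => k _; rewrite ler_wpM2l ?fine_ge0//.
  by rewrite lef_pV2 ?posrE ?surv_grid_ge ?surv_grid_gt0.
rewrite -mulr_suml ler_wpM2r ?sum_lost_le_gap// invr_ge0 ltW//.
Qed.

Lemma cumhaz_obs_status_eq :
  cumhaz P Tt (obs_status T Tt D) j t = cumhaz P T D j t.
Proof.
have surv_T_gt0 : 0 < surv P T t.
  exact: lt_le_trans surv_t_gt0 (surv_le P t mT mTt Tt_le_T).
pose sT := stieltjes_sum (subdist P T D j) (surv P T) t.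
pose sO := stieltjes_sum (subdist P Tt (obs_status T Tt D) j) (surv P Tt) t.
have diff_cvg0 : sT n - sO n @[n --> \oo] --> 0.
  apply: (squeeze_cvgr _ (cvg_cst 0)).
    exact: nearW stieltjes_sum_diff_bound.
  rewrite -(mul0r (surv P Tt t)^-1); apply: cvgM (cvg_cst _).
  exact (prob_itv_shrink_cvg0 P (measurable_funB mT mTt) (ltW tpos)).
have sO_cvg_T : sO n @[n --> \oo] --> fine (cumhaz P T D j t).
  rewrite -[fine _]subr0 (_ : sO = fun n => sT n - (sT n - sO n)).
    exact: cvgB (stieltjes_sum_cvg_cumhaz mT mD tpos surv_T_gt0) diff_cvg0.
  by apply/funext => n; rewrite opprB addrC subrK.
have sO_cvg := stieltjes_sum_cvg_cumhaz mTt measurable_obs tpos surv_t_gt0.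
rewrite -(fineK (cumhaz_fin_num mTt measurable_obs tpos surv_t_gt0)).
by rewrite (cvg_unique (@Rhausdorff R) sO_cvg sO_cvg_T) fineK ?cumhaz_fin_num.
Qed.

End representativity_identifiability.


Lemma representativity_identifiability {d0 : measure_display}
    {Omega : measurableType d0} {R : realType} (P : probability Omega R) d
    (T Tt : Omega -> R) (D : Omega -> nat) :
  model d T Tt D -> representativity P d T Tt D -> identifiability P d T Tt D.
Proof.
move=> hm hrep t j /set_mem[t_ge0 surv_t_gt0] hj.
have [[mT mTt] mD _ _ _] := hm.
have mobs : measurable [set w | obs_status T Tt D w = j].
  by apply: measurable_obs_status => //; case: j hj.
have [->|t_neq0] := eqVneq t 0; first by rewrite !cumhaz_at0.
have tpos : 0 < t by rewrite lt_neqAle eq_sym t_neq0.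
exact (cumhaz_obs_status_eq hm hrep tpos surv_t_gt0 hj).
Qed.

Section counterexample.
Context {R : realType}.

Let P : probability bool R := bernoulli_prob (1 / 2).
Let T (b : bool) : R := if b then 2 else 3.
Let Tt (b : bool) : R := T b - 1.
Let D (b : bool) : nat := 1.

Let P_set1 b : P [set b] = (1 / 2)%:E.
Proof.
rewrite -[LHS]/(bernoulli_prob (1 / 2 : R) [set b]) bernoulli_probE; last first.
  by apply/andP; split; lra.
rewrite !diracE !in_set1; case: b => /=; rewrite mule1 mule0 ?adde0 ?add0e//.
by rewrite /unstable.onem; congr (_%:E); lra.
Qed.

Let ex_model d : (1 <= d)%N -> model d T Tt D.
Proof.
move=> hd; split=> //; first by case=> /=; lra.
by move=> w; rewrite /Tt /T; case: w => /=; split; lra.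
Qed.

Let bool_set_eq (A B : set bool) :
  (A true <-> B true) -> (A false <-> B false) -> A = B.
Proof. by move=> At Af; apply/funext => -[]; apply/propext. Qed.

Let ex_not_representativity d : (1 <= d)%N -> ~ representativity P d T Tt D.
Proof.
move=> hd /(_ 2 (3 / 2) 1%N); rewrite /condprob.
have -> : [set w | T w <= 2] `&` [set w | D w = 1%N] `&` [set w | 3 / 2 < Tt w]
    = set0.
  by apply: bool_set_eq; rewrite /Tt /T /=; split=> // -[[h _] c]; lra.
have -> : [set w | T w <= 2] `&` [set w | D w = 1%N] `&` [set w | 3 / 2 < T w]
    = [set true].
  apply: bool_set_eq; rewrite /T /=; split=> //.
  - by move=> _; do !split; lra.
  - by move=> -[[h _] _]; lra.
have -> : [set w | 3 / 2 < T w] = setT.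
  by apply: bool_set_eq; rewrite /T /=; split=> // _; lra.
have Tt_gt : [set w | 3 / 2 < Tt w] = [set false].
  by apply: bool_set_eq; rewrite /Tt /T /=; split=> // h; lra.
have J32 : 3 / 2 \in Jset P Tt.
  by rewrite inE /Jset /surv /= Tt_gt P_set1 /=; split; lra.
rewrite measure0 probability_setT P_set1 /= mul0r divr1.
by move=> /(_ _ J32 hd); lra.
Qed.

Let ex_identifiability d : identifiability P d T Tt D.
Proof.
move=> t j /set_mem[t_ge0 surv_t_gt0] hj.
have j_neq0 : j != 0%N by case: j hj.
have mR (f : bool -> R) : measurable_fun setT f by [].
have [->|t_neq0] := eqVneq t 0; first by rewrite !cumhaz_at0.
have tpos : 0 < t by rewrite lt_neqAle eq_sym t_neq0.
have t_lt2 : t < 2.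
  rewrite ltNge; apply/negP => t_ge2; move: surv_t_gt0.
  rewrite /surv (_ : [set w | t < Tt w] = set0) ?measure0 ?ltxx//.
  by apply: bool_set_eq; rewrite /Tt /T /=; split=> // h; lra.
have surv_T_gt0 : 0 < surv P T t.
  apply: lt_le_trans surv_t_gt0 (surv_le P t (mR _) (mR _) _).
  by move=> w; rewrite /Tt; lra.
rewrite (cumhaz_null (mR _) _ tpos surv_t_gt0)
  ?(cumhaz_null (mR _) _ tpos surv_T_gt0)//.
- rewrite /subdist (_ : _ `&` _ = set0) ?measure0//.
  by apply: bool_set_eq; rewrite /T /= in_itv/=; split=> // -[/andP[_ h] _]; lra.
- rewrite /subdist (_ : _ `&` _ = set0) ?measure0//.
  apply: bool_set_eq; rewrite /obs_status /Tt /T /= in_itv/=;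
    split=> // -[/andP[_ h]].
    by case: eqP => [e _|_ j0]; [lra|move: j_neq0; rewrite -j0].
  by case: eqP => [e _|_ j0]; [lra|move: j_neq0; rewrite -j0].
Qed.

Lemma identifiability_not_representativity d : (1 <= d)%N ->
  exists (d0 : measure_display) (Omega : measurableType d0)
         (P : probability Omega R) (T Tt : Omega -> R) (D : Omega -> nat),
    [/\ model d T Tt D, identifiability P d T Tt D
       & ~ representativity P d T Tt D].
Proof.
move=> hd; exists _, bool, P, T, Tt, D.
split; first exact: ex_model.
  exact: ex_identifiability.
exact: ex_not_representativity.
Qed.

End counterexample.

Theorem proposition4 (R : realType) (d : nat) (hd : (1 <= d)%N) :
  (forall (d0 : measure_display) (Omega : measurableType d0)
          (P : probability Omega R) (T Tt : Omega -> R) (D : Omega -> nat),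
      model d T Tt D ->
      representativity P d T Tt D -> identifiability P d T Tt D)
  /\
  (exists (d0 : measure_display) (Omega : measurableType d0)
          (P : probability Omega R) (T Tt : Omega -> R) (D : Omega -> nat),
      [/\ model d T Tt D, identifiability P d T Tt D
        & ~ representativity P d T Tt D]).
Proof.
split; last exact: identifiability_not_representativity.
by move=> d0 Omega P T Tt D; exact: representativity_identifiability.
Qed.
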